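(* Let $\Gamma=(N,A,u)$ be a finite normal form game and let $G\le S_\Gamma$ be player transitive. There exists a matching $M$ of $A_1,\dots,A_n$ such that $M_{\overrightarrow{G}}=G$ if and only if $G$ is strategy trivial.
   Context: $S_\Gamma$ is the group of game bijections $g=(\pi;(\tau_i)_{i\in N})$ from $\Gamma$ to itself ($\pi\in S_N$, bijections $\tau_i:A_i\to A_{\pi(i)}$), with composition $(\eta;(\phi_j))\circ(\pi;(\tau_i))=(\eta\circ\pi;(\phi_{\pi(i)}\circ\tau_i)_{i\in N})$; write $g(i)=\pi(i)$, $g(s_i)=\tau_i(s_i)$. $\overrightarrow{G}\le S_N$ is the set of player permutations of elements of $G$. $G$ is player transitive if $\overrightarrow{G}$ acts transitively on $N$. $G$ is strategy trivial if for each $i\in N$, $g(s_i)=s_i$ for all $g\in G$ with $g(i)=i$ and all $s_i\in A_i$. A matching of $A_1,\dots,A_n$ is $M\subseteq\times_{i\in N}A_i$ such that for each $i$ and $a_i\in A_i$ there is exactly one $s\in M$ with $s_i=a_i$; $M_{ij}:A_i\to A_j$ sends $a_i$ to the unique $a_j$ with some $s\in M$ having $s_i=a_i,s_j=a_j$; $M_\pi=(\pi;(M_{i\pi(i)})_{i\in N})$ and $M_H=\{M_\pi:\pi\in H\}$ for $H\subseteq S_N$. *)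

From HB Require Import structures.
From mathcomp Require Import all_boot all_order all_algebra all_fingroup.
Set Implicit Arguments. Unset Strict Implicit. Unset Printing Implicit Defensive.

(* A finite normal form game Gamma = (N, A, u): players N = 'I_n,
   action sets A i : finType (nonempty), payoffs u i : profile -> R. *)

Definition profile (n : nat) (A : 'I_n -> finType) := {dffun forall i : 'I_n, A i}.

(* A game bijection
   g = (pi; (tau_i)_i) is encoded as the permutation of this disjoint union
   sending (i, s_i) to (pi i, tau_i s_i). *)
Definition strat (n : nat) (A : 'I_n -> finType) := {i : 'I_n & A i}.

Definition has_player_perm n (A : 'I_n -> finType)
  (g : {perm strat A}) (pi : {perm 'I_n}) : Prop :=
  forall x : strat A, tag (g x) = pi (tag x).

Definition is_game_bij n (A : 'I_n -> finType) (g : {perm strat A}) : Prop :=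
  exists pi : {perm 'I_n}, has_player_perm g pi.

Definition player_perms n (A : 'I_n -> finType) (G : {set {perm strat A}})
  : {set {perm 'I_n}} :=
  [set pi : {perm 'I_n} | [exists g in G, [forall x : strat A, tag (g x) == pi (tag x)]]].

Definition player_transitive n (A : 'I_n -> finType) (G : {set {perm strat A}}) : Prop :=
  forall i j : 'I_n, exists2 pi, pi \in player_perms G & pi i = j.

Definition strategy_trivial n (A : 'I_n -> finType) (G : {set {perm strat A}}) : Prop :=
  forall g pi, g \in G -> has_player_perm g pi ->
  forall i : 'I_n, pi i = i -> forall s : A i, g (Tagged A s) = Tagged A s.

Definition is_matching n (A : 'I_n -> finType) (M : {set profile A}) : Prop :=
  forall (i : 'I_n) (a : A i), exists! s : profile A, s \in M /\ s i = a.

(* The map underlying M_pi = (pi; (M_{i pi(i)})_i): (i, a) |-> (pi i, M_{i pi(i)} a),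
   where M_{ij} a is the j-component of the unique s in M with s_i = a.
   (The fallback branch is never used when M is a matching.) *)
Definition matching_map n (A : 'I_n -> finType) (M : {set profile A})
  (pi : {perm 'I_n}) (x : strat A) : strat A :=
  let: existT i a := x in
  match [pick s in M | s i == a] with
  | Some s => Tagged A (s (pi i))
  | None => x
  end.

Definition matching_realizes n (A : 'I_n -> finType) (M : {set profile A})
  (H : {set {perm 'I_n}}) (G : {set {perm strat A}}) : Prop :=
  (forall g, g \in G -> exists2 pi, pi \in H & g =1 matching_map M pi) /\
  (forall pi, pi \in H -> exists2 g, g \in G & g =1 matching_map M pi).

From HB Require Import structures.
From mathcomp Require Import all_boot all_order all_algebra all_fingroup.

Set Implicit Arguments.
Unset Strict Implicit.
Unset Printing Implicit Defensive.

Local Open Scope group_scope.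

(* If M realizes G, every g in G is some M_pi, and M_pi fixes every strategy
   of a player fixed by pi, so G is strategy trivial.  Conversely, fix a
   player i0 and, for each player j, a bijection g_j in G moving i0 to j.
   Strategy triviality says that any two elements of G sending i0 to the same
   player agree on A_i0, so the profiles s_a = (g_j(a))_j, for a in A_i0, form
   a G-invariant matching, and every element of G acts on it as the
   corresponding M_pi. *)

Section GameBijections.

Variables (n : nat) (A : 'I_n -> finType).

Lemma has_player_permM (g h : {perm strat A}) (pg ph : {perm 'I_n}) :
  has_player_perm g pg -> has_player_perm h ph ->
  has_player_perm (g * h) (pg * ph).
Proof. by move=> gpg hph x; rewrite !permM hph gpg. Qed.

Lemma has_player_permV (g : {perm strat A}) (pg : {perm 'I_n}) :
  has_player_perm g pg -> has_player_perm g^-1 pg^-1.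
Proof. by move=> gpg x; rewrite -{2}(permKV g x) gpg permK. Qed.

Lemma player_permsP (G : {set {perm strat A}}) (pi : {perm 'I_n}) :
  reflect (exists2 g, g \in G & has_player_perm g pi) (pi \in player_perms G).
Proof.
rewrite inE; apply: (iffP existsP) => [[g /andP[gG /forallP gpi]] | [g gG gpi]].
  by exists g => // x; apply/eqP.
by exists g; rewrite gG; apply/forallP => x; rewrite gpi.
Qed.

Lemma matching_mapE (M : {set profile A}) (pi : {perm 'I_n}) (s : profile A)
    (i : 'I_n) :
  is_matching M -> s \in M ->
  matching_map M pi (Tagged A (s i)) = Tagged A (s (pi i)).
Proof.
move=> Mm sM; rewrite /matching_map /=.
case: pickP => [t /andP[tM /eqP ti] | /(_ s)]; last by rewrite sM eqxx.
have [w [_ wU]] := Mm i (s i).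
by rewrite -(wU t (conj tM ti)) (wU s (conj sM erefl)).
Qed.

Lemma matching_realizes_strategy_trivial (M : {set profile A})
    (H : {set {perm 'I_n}}) (G : {set {perm strat A}}) :
  is_matching M -> matching_realizes M H G -> strategy_trivial G.
Proof.
move=> Mm [MG _] g pi gG gpi i pii a.
have [pi' _ gE] := MG g gG.
have [s [[sM <-] _]] := Mm i a.
have gs : g (Tagged A (s i)) = Tagged A (s (pi' i)) by rewrite gE matching_mapE.
have pi'i : pi' i = i by have := gpi (Tagged A (s i)); rewrite gs /= pii.
by rewrite gs pi'i.
Qed.

Variables (G : {group {perm strat A}}).
Hypothesis G_game : forall g, g \in G -> is_game_bij g.

Lemma matching_realizes_of_agree (M : {set profile A}) :
  (forall g pi, g \in G -> has_player_perm g pi -> g =1 matching_map M pi) ->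
  matching_realizes M (player_perms G) G.
Proof.
move=> agree; split=> [g gG | pi /player_permsP[g gG gpi]].
  have [pi gpi] := G_game gG.
  by exists pi; [apply/player_permsP; exists g | exact: agree].
by exists g => //; exact: agree.
Qed.

Hypothesis G_triv : strategy_trivial G.

Lemma strategy_trivial_eq_on_player (g h : {perm strat A})
    (pg ph : {perm 'I_n}) (i : 'I_n) :
  g \in G -> h \in G -> has_player_perm g pg -> has_player_perm h ph ->
  pg i = ph i -> forall a : A i, g (Tagged A a) = h (Tagged A a).
Proof.
move=> gG hG gpg hph pgh a.
have kG : g * h^-1 \in G by rewrite groupM ?groupV.
have kpk := has_player_permM gpg (has_player_permV hph).
have pki : (pg * ph^-1) i = i by rewrite permM pgh permK.
have := G_triv kG kpk pki a; rewrite permM => /(congr1 h).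
by rewrite permKV.
Qed.

Hypothesis G_trans : player_transitive G.
Variables (i0 : 'I_n) (a0 : A i0).

Definition moves_base_to (j : 'I_n) : pred {perm strat A} :=
  fun g => (g \in G) && [forall a : A i0, tag (g (Tagged A a)) == j].

Lemma exists_moves_base_to j : exists g, moves_base_to j g.
Proof.
have [pi /player_permsP[g gG gpi] pij] := G_trans i0 j.
by exists g; rewrite /moves_base_to gG; apply/forallP => a; rewrite gpi pij.
Qed.

Definition base_mover j : {perm strat A} := xchoose (exists_moves_base_to j).

Lemma base_mover_in j : base_mover j \in G.
Proof. by case/andP: (xchooseP (exists_moves_base_to j)). Qed.

Lemma base_mover_tag j (a : A i0) : tag (base_mover j (Tagged A a)) = j.
Proof. by case/andP: (xchooseP (exists_moves_base_to j)) => _ /forallP/(_ a)/eqP. Qed.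

Definition base_profile (a : A i0) : profile A :=
  [ffun j => etagged (base_mover_tag j a)].

Lemma base_profileE a j : Tagged A (base_profile a j) = base_mover j (Tagged A a).
Proof. by rewrite ffunE etaggedK. Qed.

Lemma base_profile_act (g : {perm strat A}) (a : A i0) : g \in G ->
  g (Tagged A a) = Tagged A (base_profile a (tag (g (Tagged A a)))).
Proof.
move=> gG; rewrite base_profileE.
have [pg gpg] := G_game gG.
have [pm mpm] := G_game (base_mover_in (tag (g (Tagged A a)))).
apply: (strategy_trivial_eq_on_player gG (base_mover_in _) gpg mpm _ a).
by rewrite -(gpg (Tagged A a)) -(mpm (Tagged A a)) base_mover_tag.
Qed.

Lemma base_profile_onto (i : 'I_n) (b : A i) :
  exists a : A i0, base_profile a i = b.
Proof.
have [pm mpm] := G_game (base_mover_in i).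
have back : tag ((base_mover i)^-1 (Tagged A b)) = i0.
  by rewrite (has_player_permV mpm) /= -(base_mover_tag i a0) mpm permK.
exists (etagged back); apply: eq_from_Tagged.
by rewrite base_profileE etaggedK permKV.
Qed.

Definition base_matching : {set profile A} := [set base_profile a | a : A i0].

Lemma base_matching_is_matching : is_matching base_matching.
Proof.
move=> i b; have [a <-] := base_profile_onto b.
exists (base_profile a); split=> [|_ [/imsetP[a' _ ->] eq_a'a]].
  by split=> //; apply/imsetP; exists a.
have : base_mover i (Tagged A a') = base_mover i (Tagged A a).
  by rewrite -!base_profileE eq_a'a.
by move/perm_inj/(@eq_from_Tagged _ A) => ->.
Qed.

Lemma base_matching_realizes :
  matching_realizes base_matching (player_perms G) G.
Proof.
apply: matching_realizes_of_agree => g pi gG gpi [i b].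
have [a <-] := base_profile_onto b.
have act := base_profile_act a (groupM (base_mover_in i) gG).
rewrite permM gpi base_mover_tag in act.
rewrite matching_mapE ?imset_f //; last exact: base_matching_is_matching.
by rewrite -act -base_profileE.
Qed.

End GameBijections.

Theorem theorem4p23 (R : numDomainType) (n : nat) (A : 'I_n -> finType)
  (u : 'I_n -> profile A -> R)
  (A_nonempty : forall i : 'I_n, 0 < #|A i|)
  (G : {group {perm strat A}})
  (G_game : forall g, g \in G -> is_game_bij g)
  (G_trans : player_transitive G) :
  (exists M : {set profile A},
     is_matching M /\ matching_realizes M (player_perms G) G)
  <-> strategy_trivial G.
Proof.
split=> [[M [Mm MG]] | G_triv]; first exact: matching_realizes_strategy_trivial Mm MG.
have [i0 _ | no_player] := pickP (@predT 'I_n).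
  have [a0 _] := card_gt0P (A_nonempty i0).
  exists (base_matching G_trans i0); split.
    exact: base_matching_is_matching.
  exact: base_matching_realizes.
have no_strat (x : strat A) : False by case: x => i; have := no_player i.
exists setT; split=> [i | ]; first by have := no_player i.
by apply: matching_realizes_of_agree => // g pi _ _ x; case: (no_strat x).
Qed.
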